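(* Let $\{X_t\}_{t\in\mathbb{R}}$ be Banach spaces, $\{S(t,s):X_s\to X_t\}_{s\le t}$ a process with a pullback absorber $\mathfrak{B}$, and suppose that for all $t$ and $s\le t$ there are $P(t,s),N(t,s)\subset X_t$ with $S(t,s)\mathfrak{B}(s)=P(t,s)+N(t,s)$, $\lim_{s\to-\infty}\|P(t,s)\|_{X_t}=0$ for every $t$, and $N(t,s)$ compact in $X_t$. Let $\{Y_t\}_{t\in\mathbb{R}}$ be Banach spaces such that for every $t\in\mathbb{R}$: $Y_t$ is compactly embedded in $X_t$; the canonical injections $\mathcal{I}_s:Y_s\to X_s$ satisfy $\sup_{s\le t}\|\mathcal{I}_s\|_{\mathcal{L}(Y_s,X_s)}=C(t)<\infty$; and closed balls of $Y_t$ are closed in $X_t$. If moreover $$\sup_{s\in(-\infty,t]}\|N(t,s)\|_{Y_t}=h(t)<\infty\qquad\forall t\in\mathbb{R},$$ then the time-dependent global attractor $\mathcal{A}=\omega_{\mathfrak{B}}$ is a pullback-bounded family, it is the unique time-dependent global attractor within the class of pullback-bounded families, and $\|\mathcal{A}(t)\|_{Y_t}\le h(t)$ for every $t\in\mathbb{R}$.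
   Context: A process is a family of maps $S(t,s):X_s\to X_t$, $s\le t$, with $S(t,t)=\mathrm{Id}$, each $S(t,s)$ continuous, and $S(\tau,t)S(t,s)=S(\tau,s)$ for $s\le t\le\tau$. For $D\subset X$, $\|D\|_X=\sup_{z\in D}\|z\|_X$ (with $\|D\|_{Y_t}=\infty$ if $D\not\subset Y_t$); $P+N=\{p+n:p\in P,n\in N\}$. A family $\mathcal{B}=\{\mathcal{B}(t)\subset X_t\}$ is pullback-bounded if $\sup_{s\le t}\|\mathcal{B}(s)\|_{X_s}<\infty$ for each $t$. A pullback-bounded family $\mathfrak{B}$ is a pullback absorber if for every pullback-bounded $\mathcal{B}$ and every $t$ there is $t_0\le t$ with $S(t,s)\mathcal{B}(s)\subset\mathfrak{B}(t)$ for all $s\le t_0$. A time-dependent global attractor is a family of compact sets $\mathcal{A}(t)\subset X_t$ with $S(t,s)\mathcal{A}(s)=\mathcal{A}(t)$ for $s\le t$ and $\lim_{s\to-\infty}\mathrm{dist}_{X_t}(S(t,s)\mathcal{B}(s),\mathcal{A}(t))=0$ for every pullback-bounded $\mathcal{B}$ and every $t$, where $\mathrm{dist}_X(A,B)=\sup_{x\in A}\inf_{y\in B}\|x-y\|_X$. $\omega_{\mathfrak{B}}(t)=\bigcap_{\tau\le t}\overline{\bigcup_{s\le\tau}S(t,s)\mathfrak{B}(s)}$ (closure in $X_t$); under the stated hypotheses it is a time-dependent global attractor. *)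

From HB Require Import structures.
From mathcomp Require Import all_boot all_order all_algebra.
From mathcomp Require Import all_classical all_reals all_analysis.
Set Implicit Arguments. Unset Strict Implicit. Unset Printing Implicit Defensive.
Import Order.TTheory GRing.Theory Num.Theory.
Import numFieldNormedType.Exports.
Local Open Scope classical_set_scope.
Local Open Scope ring_scope.

Section Defs.
Variable R : realType.

(* ||D||_X = sup_{z in D} ||z||, in [0, +oo] (sup of the empty set is 0). *)
Definition setnorm (V : normedModType R) (D : set V) : \bar R :=
  ereal_sup (0%E |` [set (`|z|)%:E | z in D]).

Definition Ysetnorm (Y X : normedModType R) (iota : Y -> X) (D : set X) : \bar R :=
  if `[< D `<=` range iota >] then
    ereal_sup (0%E |` [set (`|y|)%:E | y in iota @^-1` D])
  else +oo%E.

Definition hdist (V : normedModType R) (A B : set V) : \bar R :=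
  ereal_sup (0%E |` [set ereal_inf [set (`|x - y|)%:E | y in B] | x in A]).

Variable X : R -> normedModType R.

Definition is_process (S : forall t s : R, X s -> X t) : Prop :=
  (forall t (x : X t), S t t x = x) /\
  (forall t s, s <= t -> continuous (S t s)) /\
  (forall tau t s, s <= t -> t <= tau ->
     forall x : X s, S tau t (S t s x) = S tau s x).

Definition pullback_bounded (B : forall t : R, set (X t)) : Prop :=
  forall t : R, exists M : R, forall s : R, s <= t -> (setnorm (B s) <= M%:E)%E.

Definition pullback_absorber (S : forall t s : R, X s -> X t)
  (B : forall t : R, set (X t)) : Prop :=
  pullback_bounded B /\
  forall D : forall t : R, set (X t), pullback_bounded D ->
    forall t : R, exists t0 : R, t0 <= t /\
      forall s : R, s <= t0 -> S t s @` D s `<=` B t.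

Definition is_tdga (S : forall t s : R, X s -> X t)
  (A : forall t : R, set (X t)) : Prop :=
  (forall t, compact (A t)) /\
  (forall t s, s <= t -> S t s @` A s = A t) /\
  (forall D : forall t : R, set (X t), pullback_bounded D ->
     forall t : R, hdist (S t s @` D s) (A t) @[s --> -oo] --> 0%E).

Definition omega_lim (S : forall t s : R, X s -> X t)
  (B : forall t : R, set (X t)) (t : R) : set (X t) :=
  \bigcap_(tau in `]-oo, t]) closure (\bigcup_(s in `]-oo, tau]) (S t s @` B s)).

End Defs.

Arguments omega_lim [R X] S B t.

From HB Require Import structures.
From mathcomp Require Import all_boot all_order all_algebra.
From mathcomp Require Import all_classical all_reals all_analysis.
From mathcomp Require Import lra.
Import Order.TTheory GRing.Theory Num.Theory.
Import numFieldNormedType.Exports.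
Local Open Scope classical_set_scope.
Local Open Scope ring_scope.

(* The closed ball of radius [h t] of [Y t] is a compact subset of [X t]
   containing every [N t s]; as [P t s] shrinks to 0, these balls pullback-attract
   the absorber [B].  Whenever an absorber is attracted by a family of compact
   sets [K], its omega-limit is contained in [K]: it is then compact, invariant
   (forward by continuity of [S t s], backward by attraction and uniform
   continuity of [S t s] near the compact set omega(s)) and attracting, by a
   covering argument on [K t].  Any pullback-bounded attractor [A] is absorbed
   by [B], hence contained in omega, and attracts omega, hence contains it. *)

Lemma ler_expR_ln {R : realType} {c x : R} : 0 < c -> x <= ln c -> expR x <= c.
Proof. by move=> c0 xc; rewrite -[c]lnK ?posrE // ler_expR. Qed.

Lemma near_ninfty_ex_le {R : realType} {Q : R -> Prop} (a : R) :
  (\forall s \near -oo, Q s) -> exists2 τ, τ <= a & forall s, s <= τ -> Q s.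
Proof.
move=> [M [_ HM]]; exists (Num.min a (M - 1)); first by rewrite ge_min lexx.
move=> s; rewrite le_min => /andP[_ sM]; apply: HM.
by apply: le_lt_trans sM _; rewrite ltrBlDr ltrDl.
Qed.

Lemma cvge0_near_lt {R : realType} {T : Type} {F : set_system T} {FF : Filter F}
    {f : T -> \bar R} {e : R} :
  f @ F --> 0%E -> 0 < e -> \forall s \near F, (f s < e%:E)%E.
Proof.
move=> f0 e0; have := f0 [set y | (y < e%:E)%E]; apply.
by apply: open_ereal_lt'; rewrite lte_fin.
Qed.

Section normed_space.
Context {R : realType} {V : normedModType R}.
Implicit Types (A : set V) (x y z : V).

Lemma closure_normP A x :
  closure A x <-> forall e : R, 0 < e -> exists2 a, A a & `|x - a| < e.
Proof.
split=> [clAx e e0|Ax U /nbhs_normP [e e0 xeU]].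
  have [|a [Aa xa]] := clAx [set z | `|x - z| < e]; last by exists a.
  by apply/nbhs_normP; exists e.
by have [a Aa xa] := Ax e e0; exists a; split => //; apply: xeU.
Qed.

Lemma not_closure_dist A y :
  ~ closure A y -> exists2 r : R, 0 < r & forall a, A a -> r <= `|y - a|.
Proof.
move=> nAy; apply: contrapT => nr; apply: nAy; apply/closure_normP => r r0.
apply: contrapT => nAr; apply: nr; exists r => // a Aa; rewrite leNgt.
by apply/negP => ya; apply: nAr; exists a.
Qed.

Lemma continuous_dist_lt {W : normedModType R} {f : V -> W} {x} :
  {for x, continuous f} ->
  forall e : R, 0 < e ->
  exists2 d : R, 0 < d & forall z, `|x - z| < d -> `|f x - f z| < e.
Proof.
move=> /cvgr_dist_lt fx e /fx /nbhs_normP [d d0 xdf].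
by exists d.
Qed.

Lemma near_ball_ninfty {P : R -> V -> Prop} {y} {r : R} (m : R) : 0 < r ->
  (forall x τ, `|y - x| < r -> τ < m -> P τ x) ->
  \forall x \near y & τ \near -oo, P τ x.
Proof.
move=> r0 yP; exists ([set x | `|y - x| < r], [set τ | τ < m]).
  by split => /=; [apply/nbhs_normP; exists r | exists m; split; rewrite ?num_real].
by case=> x τ [/= yx τm]; apply: yP.
Qed.

(* In the two covering arguments below the parameter τ of the filter [-oo]
   also fixes the radius [expR τ], which tends to 0 with τ. *)
Lemma compact_uniform_continuous {W : normedModType R} {f : V -> W} {A} {e : R} :
  compact A -> continuous f -> 0 < e ->
  exists2 d : R, 0 < d & forall y z, A y -> `|y - z| < d -> `|f y - f z| < e.
Proof.
move=> /compact_near_coveringP cA fc e0.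
have e20 : 0 < e / 2 by rewrite divr_gt0.
have : \forall τ \near -oo, A `<=` fun y =>
    forall z, `|y - z| < expR τ -> `|f y - f z| < e.
  apply: (cA _ _ (fun τ y => forall z, `|y - z| < expR τ -> `|f y - f z| < e))
    => y Ay.
  have [r r0 yr] := continuous_dist_lt (fc y) _ e20.
  have r20 : 0 < r / 2 by rewrite divr_gt0.
  apply: (near_ball_ninfty (ln (r / 2)) r20) => y' τ yy' τr z y'z.
  have := ler_expR_ln r20 (ltW τr); have := ler_distD y' y z => yz rτ.
  have fyz : `|f y - f z| < e / 2 by apply: yr; lra.
  have fyy' : `|f y - f y'| < e / 2 by apply: yr; lra.
  have := ler_distD (f y) (f y') (f z); rewrite (distrC (f y') (f y)); lra.
move=> /(near_ninfty_ex_le 0) [τ _ Aτ].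
by exists (expR τ); [exact: expR_gt0 | move=> y z Ay; exact: Aτ].
Qed.

Lemma compact_tail_approx {K W} {U : R -> set V} (a : R) {e : R} :
  compact K -> (forall σ τ, σ <= τ -> U σ `<=` U τ) ->
  (forall y, K y -> ~ W y -> exists τ, ~ closure (U τ) y) -> 0 < e ->
  exists2 τ, τ <= a & exists2 g : R, 0 < g &
    forall k z, K k -> U τ z -> `|z - k| < g -> exists2 w, W w & `|z - w| < e.
Proof.
move=> /compact_near_coveringP cK Umono KW e0.
have e20 : 0 < e / 2 by rewrite divr_gt0.
pose Q τ y := (exists2 w, W w & `|y - w| < e / 2) \/
              (forall z, U τ z -> expR τ <= `|z - y|).
have : \forall τ \near -oo, K `<=` Q τ.
  apply: (cK _ _ Q) => y Ky; case: (pselect (W y)) => [Wy | nWy].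
    by apply: (near_ball_ninfty 0 e20) => x τ yx _; left; exists y; rewrite // distrC.
  have [τ0 /not_closure_dist [r r0 yr]] := KW y Ky nWy.
  have r20 : 0 < r / 2 by rewrite divr_gt0.
  apply: (near_ball_ninfty (Num.min τ0 (ln (r / 2))) r20) => x τ yx.
  rewrite lt_min => /andP[τ0τ τr]; right => z Uz.
  have := yr z (Umono _ _ (ltW τ0τ) _ Uz); have := ler_expR_ln r20 (ltW τr).
  have := ler_distD x y z; rewrite (distrC x z); lra.
move=> /(near_ninfty_ex_le (Num.min a (ln (e / 2)))) [τ].
rewrite le_min => /andP[τa τe] Kτ; exists τ => //.
exists (expR τ) => [|k z Kk Uz zk]; first exact: expR_gt0.
case: (Kτ τ (lexx τ) k Kk) => [[w Ww kw] | far]; last first.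
  by have := far z Uz; rewrite leNgt zk.
exists w => //; have := ler_distD k z w; have := ler_expR_ln e20 τe; lra.
Qed.

Lemma setnorm_ge0 A : (0 <= setnorm A)%E.
Proof. by apply: ereal_sup_ubound; left. Qed.

Lemma setnorm_ub {A x} : A x -> (`|x|%:E <= setnorm A)%E.
Proof. by move=> Ax; apply: ereal_sup_ubound; right; exists x. Qed.

Lemma setnorm_le_closure A D (M : R) :
  A `<=` closure D -> (setnorm D <= M%:E)%E -> (setnorm A <= M%:E)%E.
Proof.
move=> AD DM; apply: ge_ereal_sup => _ [-> | [x Ax <-]].
  exact: le_trans (setnorm_ge0 D) DM.
rewrite lee_fin; apply/ler_addgt0Pr => e e0.
have [d Dd xd] := (closure_normP _ _).1 (AD x Ax) e e0.
have := le_trans (setnorm_ub Dd) DM; rewrite lee_fin.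
have := ler_normD (x - d) d; rewrite subrK; lra.
Qed.

Lemma hdist_ge0 A D : (0 <= hdist A D)%E.
Proof. by apply: ereal_sup_ubound; left. Qed.

Lemma hdist_le {A D} {e : R} : 0 <= e ->
  (forall x, A x -> exists2 y, D y & `|x - y| < e) -> (hdist A D <= e%:E)%E.
Proof.
move=> e0 AD; apply: ge_ereal_sup => _ [-> | [x Ax <-]]; first by rewrite lee_fin.
have [y Dy xy] := AD x Ax; apply: le_trans (ereal_inf_lbound _) _.
  by exists y.
by rewrite lee_fin ltW.
Qed.

Lemma hdist_lt {A D} {e : R} {x} :
  (hdist A D < e%:E)%E -> A x -> exists2 y, D y & `|x - y| < e.
Proof.
move=> ADe Ax.
have : (ereal_inf [set (`|x - y|)%:E | y in D] < e%:E)%E.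
  by apply: le_lt_trans ADe; apply: ereal_sup_ubound; right; exists x.
by move=> /ereal_inf_lt [_ [y Dy <-]]; rewrite lte_fin; exists y.
Qed.

Lemma hdist_cvg0P {T : Type} (F : set_system T) {FF : Filter F}
    (A : T -> set V) (D : set V) :
  hdist (A s) D @[s --> F] --> 0%E <->
  forall e : R, 0 < e ->
    \forall s \near F, forall x, A s x -> exists2 y, D y & `|x - y| < e.
Proof.
split=> [AD e e0 | AD].
  by apply: filterS (cvge0_near_lt AD e0) => s ADe x; exact: hdist_lt.
move=> U /nbhs_EFin /nbhs_normP [e /= e0 eU].
have e20 : 0 < e / 2 by rewrite divr_gt0.
apply: filterS (AD _ e20) => s /(hdist_le (ltW e20)).
rewrite /preimage /=.
case: (hdist (A s) D) (hdist_ge0 (A s) D) => [r | | ] //=; rewrite !lee_fin => r0 re.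
apply: eU; rewrite /= sub0r normrN ger0_norm //; lra.
Qed.

End normed_space.

Section embedded_norm.
Context {R : realType} {Y X : normedModType R} {iota : Y -> X}.

Lemma Ysetnorm_ge0 (D : set X) : (0 <= Ysetnorm iota D)%E.
Proof.
rewrite /Ysetnorm; case: asboolP => _; last by rewrite leey.
by apply: ereal_sup_ubound; left.
Qed.

Lemma Ysetnorm_leP {D : set X} {r : R} : injective iota -> 0 <= r ->
  (Ysetnorm iota D <= r%:E)%E <-> D `<=` iota @` [set y | `|y| <= r].
Proof.
move=> iota_inj r0; rewrite /Ysetnorm; case: asboolP => [DY | nDY]; split => //.
- move=> Dr x Dx; have [y _ yx] := DY x Dx; exists y => //.
  rewrite /= -lee_fin; apply: le_trans Dr; apply: ereal_sup_ubound.
  by right; exists y; rewrite // /preimage /= yx.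
- move=> Dr; apply: ge_ereal_sup => _ [-> | [y Dy <-]]; first by rewrite lee_fin.
  by have [y' y'r /iota_inj <-] := Dr _ Dy.
- by move=> Dr; exfalso; apply: nDY => x /Dr [y _ <-]; exists y.
Qed.

End embedded_norm.

Section omega_limit.
Context {R : realType} {X : R -> normedModType R}.
Context {S : forall t s : R, X s -> X t} {B K : forall t : R, set (X t)}.
Implicit Types (t s σ τ : R).
Hypothesis S_process : is_process S.
Hypothesis B_absorber : pullback_absorber S B.
Hypothesis K_compact : forall t, compact (K t).
Hypothesis K_attracts : forall t (e : R), 0 < e ->
  \forall s \near -oo, forall b, B s b -> exists2 k, K t k & `|S t s b - k| < e.

Definition pullback_tail t τ : set (X t) := \bigcup_(s in `]-oo, τ]) (S t s @` B s).

Lemma pullback_tailP t τ z :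
  pullback_tail t τ z <-> exists2 s, s <= τ & exists2 b, B s b & S t s b = z.
Proof.
split=> [[s /= + Bsz] | [s sτ Bsz]]; last by exists s; rewrite //= in_itv.
by rewrite in_itv /= => sτ; exists s.
Qed.

Lemma pullback_tail_le t σ τ : σ <= τ -> pullback_tail t σ `<=` pullback_tail t τ.
Proof.
move=> στ z /pullback_tailP [s sσ Bsz]; apply/pullback_tailP.
by exists s => //; apply: le_trans στ.
Qed.

Lemma omega_limP t x :
  omega_lim S B t x <-> forall τ, τ <= t -> closure (pullback_tail t τ) x.
Proof.
split=> [omx τ τt | omx τ]; first by apply: omx; rewrite /= in_itv /=.
by rewrite /= in_itv /=; apply: omx.
Qed.

Lemma omega_lim_closed t : closed (omega_lim S B t).
Proof. by apply: closed_bigI => τ _; exact: closed_closure. Qed.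

Lemma omega_lim_subK t : omega_lim S B t `<=` K t.
Proof.
move=> x /omega_limP omx.
rewrite (closure_id (K t)).1; last exact: compact_closed (@norm_hausdorff _ _) (K_compact t).
apply/closure_normP => e e0; have e20 : 0 < e / 2 by rewrite divr_gt0.
have [τ τt Kτ] := near_ninfty_ex_le t (K_attracts t _ e20).
have [_ /pullback_tailP [s sτ [b Bb <-]] xz] := (closure_normP _ _).1 (omx τ τt) _ e20.
have [k Kk zk] := Kτ s sτ b Bb; exists k => //.
by have := ler_distD (S t s b) x k; lra.
Qed.

Lemma omega_lim_compact t : compact (omega_lim S B t).
Proof. exact: subclosed_compact (omega_lim_closed t) (K_compact t) (@omega_lim_subK t). Qed.

Lemma omega_lim_pullback_bounded : pullback_bounded (omega_lim S B).
Proof.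
move=> t; have [M BM] := B_absorber.1 t; exists M => s st.
have [t0 [t0s B_to_B]] := B_absorber.2 B B_absorber.1 s.
apply: setnorm_le_closure (BM s st) => x /omega_limP /(_ t0 t0s).
apply: closureS => _ /pullback_tailP [r rt0 [b Bb <-]].
by apply: (B_to_B r rt0); exists b.
Qed.

Lemma omega_lim_attracts {D} : pullback_bounded D -> forall t (e : R), 0 < e ->
  \forall s \near -oo, forall x, D s x ->
    exists2 w, omega_lim S B t w & `|S t s x - w| < e.
Proof.
move=> Dpb t e e0.
have far_from_tails y : K t y -> ~ omega_lim S B t y ->
    exists τ, ~ closure (pullback_tail t τ) y.
  move=> _ /omega_limP nomy; apply: contrapT => nτ; apply: nomy => τ _.
  by apply: contrapT => ncl; apply: nτ; exists τ.
have [τ τt [g g0 near_omega]] :=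
  compact_tail_approx t (K_compact t) (@pullback_tail_le t) far_from_tails e0.
have [r rτ Kr] := near_ninfty_ex_le τ (K_attracts t _ g0).
have [t0 [t0r D_to_B]] := B_absorber.2 D Dpb r.
exists t0; split; first exact: num_real.
move=> s st0 x Dx; have sr : s <= r by apply: le_trans t0r; exact: ltW.
have BSx : B r (S r s x) by apply: (D_to_B s (ltW st0)); exists x.
have [k Kk xk] := Kr r (lexx r) _ BSx.
have rt : r <= t by apply: le_trans τt.
rewrite -(S_process.2.2 t r s sr rt) in xk *.
by apply: near_omega Kk _ xk; apply/pullback_tailP; exists r => //; exists (S r s x).
Qed.

Lemma omega_lim_subinvariant t s : s <= t ->
  S t s @` omega_lim S B s `<=` omega_lim S B t.
Proof.
move=> st _ [x /omega_limP omx <-]; apply/omega_limP => τ τt.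
apply/closure_normP => e e0.
have [d d0 Sd] := continuous_dist_lt (S_process.2.1 t s st x) _ e0.
have ms : Num.min τ s <= s by rewrite ge_min lexx orbT.
have [_ /pullback_tailP [r rm [b Bb <-]] xb] := (closure_normP _ _).1 (omx _ ms) _ d0.
move: rm; rewrite le_min => /andP[rτ rs].
exists (S t r b); first by apply/pullback_tailP; exists r => //; exists b.
by rewrite -(S_process.2.2 t s r rs st); exact: Sd.
Qed.

Lemma omega_lim_supinvariant t s : s <= t ->
  omega_lim S B t `<=` S t s @` omega_lim S B s.
Proof.
move=> st x /omega_limP omx.
have Sc := S_process.2.1 t s st.
rewrite (closure_id (S t s @` omega_lim S B s)).1; last first.
  apply: compact_closed (@norm_hausdorff _ _) _.
  exact: continuous_compact (continuous_subspaceT Sc) (omega_lim_compact s).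
apply/closure_normP => e e0; have e20 : 0 < e / 2 by rewrite divr_gt0.
have [d d0 Sd] := compact_uniform_continuous (omega_lim_compact s) Sc e20.
have [τ τs attr] := near_ninfty_ex_le s (omega_lim_attracts B_absorber.1 s _ d0).
have [_ /pullback_tailP [r rτ [b Bb <-]] xb] :=
  (closure_normP _ _).1 (omx τ (le_trans τs st)) _ e20.
have [w omw bw] := attr r rτ b Bb.
exists (S t s w); first by exists w.
rewrite distrC in bw; have := Sd w (S s r b) omw bw.
rewrite (S_process.2.2 t s r (le_trans rτ τs) st).
by have := ler_distD (S t r b) x (S t s w); rewrite (distrC (S t r b)); lra.
Qed.

Lemma omega_lim_invariant t s : s <= t -> S t s @` omega_lim S B s = omega_lim S B t.
Proof.
move=> st; apply/seteqP; split.
- exact: omega_lim_subinvariant.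
- exact: omega_lim_supinvariant.
Qed.

Lemma omega_lim_tdga : is_tdga S (omega_lim S B).
Proof.
split; first exact: omega_lim_compact.
split; first exact: omega_lim_invariant.
move=> D Dpb t; apply/hdist_cvg0P => e e0.
apply: filterS (omega_lim_attracts Dpb t _ e0) => s attr _ [x Dx <-].
exact: attr.
Qed.

Lemma tdga_unique A : is_tdga S A -> pullback_bounded A -> A = omega_lim S B.
Proof.
move=> [A_compact [A_inv A_attr]] Apb.
apply: functional_extensionality_dep => t; apply/seteqP; split.
  move=> x Ax; apply/omega_limP => τ τt; apply: subset_closure.
  rewrite -(A_inv t τ τt) in Ax; case: Ax => a Aa <-.
  apply/pullback_tailP; exists τ => //; exists a => //.
  have [t0 [t0τ A_to_B]] := B_absorber.2 A Apb τ.
  by rewrite -(A_inv τ t0 t0τ) in Aa; exact: A_to_B t0 (lexx t0) _ Aa.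
move=> x omx.
rewrite (closure_id (A t)).1; last exact: compact_closed (@norm_hausdorff _ _) (A_compact t).
apply/closure_normP => e e0.
have [τ τt attr] :=
  near_ninfty_ex_le t ((hdist_cvg0P _ _ _).1 (A_attr _ omega_lim_pullback_bounded t) e e0).
by apply: (attr τ (lexx τ) x); rewrite omega_lim_invariant.
Qed.

End omega_limit.

Theorem corollary2p7 (R : realType)
  (X : R -> completeNormedModType R)
  (S : forall t s : R, X s -> X t)
  (B : forall t : R, set (X t))
  (P N : forall t s : R, set (X t))
  (Y : R -> completeNormedModType R)
  (iota : forall t : R, {linear Y t -> X t})
  (h : R -> R) :
  is_process S ->
  pullback_absorber S B ->
  (forall t s, s <= t -> S t s @` B s = [set p + n | p in P t s & n in N t s]) ->
  (forall t, setnorm (P t s) @[s --> -oo] --> 0%E) ->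
  (forall t s, s <= t -> compact (N t s)) ->
  (forall t, injective (iota t)) ->
  (forall t (A : set (Y t)), (exists M : R, forall y, A y -> `|y| <= M) ->
     compact (closure (iota t @` A))) ->
  (forall t, exists C : R, forall s, s <= t -> forall y : Y s,
     `|iota s y| <= C * `|y|) ->
  (forall t (y0 : Y t) (r : R), closed (iota t @` [set y | `|y - y0| <= r])) ->
  (forall t, ereal_sup [set Ysetnorm (iota t) (N t s) | s in `]-oo, t] ] = (h t)%:E) ->
  is_tdga S (omega_lim S B) /\
  pullback_bounded (omega_lim S B) /\
  (forall A : forall t : R, set (X t),
     is_tdga S A -> pullback_bounded A -> A = omega_lim S B) /\
  (forall t, (Ysetnorm (iota t) (omega_lim S B t) <= (h t)%:E)%E).
Proof.
move=> S_process B_absorber S_decomp P_cvg0 _ iota_inj iota_compact _ ball_closed h_sup.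
pose K t := iota t @` [set y | `|y| <= h t].
have N_norm t s : s <= t -> (Ysetnorm (iota t) (N t s) <= (h t)%:E)%E.
  by move=> st; rewrite -h_sup; apply: ereal_sup_ubound; exists s; rewrite //= in_itv.
have h_ge0 t : 0 <= h t.
  by rewrite -lee_fin; apply: le_trans (N_norm t t (lexx t)); exact: Ysetnorm_ge0.
have N_sub_K t s : s <= t -> N t s `<=` K t.
  by move=> st; apply/(Ysetnorm_leP (iota_inj t) (h_ge0 t)); exact: N_norm.
have K_compact t : compact (K t).
  have K_closed : closed (K t).
    by have := ball_closed t 0 (h t); under eq_set do rewrite subr0.
  rewrite (closure_id (K t)).1 //; apply: iota_compact.
  by exists (h t) => y.
have K_attracts t (e : R) : 0 < e ->
    \forall s \near -oo, forall b, B s b -> exists2 k, K t k & `|S t s b - k| < e.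
  move=> e0; apply: filterS2 (cvge0_near_lt (P_cvg0 t) e0) (nbhs_ninfty_le (num_real t)).
  move=> s Pe st b Bb; have : (S t s @` B s) (S t s b) by exists b.
  rewrite S_decomp // => -[p Pp [n Nn <-]]; exists n; first exact: N_sub_K Nn.
  by rewrite addrK -lte_fin; apply: le_lt_trans Pe; exact: setnorm_ub.
split; first exact: (omega_lim_tdga S_process B_absorber K_compact K_attracts).
split; first exact: (omega_lim_pullback_bounded B_absorber).
split; first exact: (tdga_unique S_process B_absorber K_compact K_attracts).
by move=> t; apply/(Ysetnorm_leP (iota_inj t) (h_ge0 t)); exact: (omega_lim_subK K_compact K_attracts).
Qed.
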